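(* Let $\mu,\nu,\rho$ be nonnegative integers with $2\rho\le\nu-1$. For integers $m,n$ put $m'=m+q^{\mu-\rho}$ and $n'=n+q^\rho$. Then $$\#\big\{(m,n)\in\mathbb{Z}^2:\ q^{\mu-1}\le m<q^\mu,\ q^{\nu-1}\le n<q^\nu,\ T_q(mn)\ne T_q(m'n')\big\}\ll\log(q^{\mu+\nu})\,q^{\mu+\nu-\rho}.$$
   Context: $q\ge2$ is a fixed integer; for real $x>0$, $T_q(x)=\lfloor\log x/\log q\rfloor$. The implied constant depends at most on $q$. *)

From Stdlib Require Import Reals Lra Lia ZArith Arith List.
Open Scope R_scope.

Definition Tq (q : nat) (x : R) : Z := Int_part (ln x / ln (INR q)).

(* Exponents are integers (powerRZ), so q^(mu-1), q^(mu-rho) may be fractional. *)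
Definition bad (q mu nu rho : nat) (m n : nat) : bool :=
  let Q := INR q in
  let M := INR m in
  let N := INR n in
  let M' := M + powerRZ Q (Z.of_nat mu - Z.of_nat rho) in
  let N' := N + powerRZ Q (Z.of_nat rho) in
  if Rle_dec (powerRZ Q (Z.of_nat mu - 1)) M then
  if Rlt_dec M (Q ^ mu) then
  if Rle_dec (powerRZ Q (Z.of_nat nu - 1)) N then
  if Rlt_dec N (Q ^ nu) then
  if Z.eq_dec (Tq q (M * N)) (Tq q (M' * N')) then false else true
  else false else false else false else false.

(* Number of pairs (m,n) in Z^2 with the property; any such pair has
   0 < m < q^mu and 0 < n < q^nu, so enumerating 0..q^mu-1, 0..q^nu-1 suffices. *)
Definition badcount (q mu nu rho : nat) : nat :=
  length (filter (fun p => bad q mu nu rho (fst p) (snd p))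
                 (list_prod (seq 0 (q ^ mu)) (seq 0 (q ^ nu)))).

From Stdlib Require Import Reals Lra Lia ZArith Arith List.
Import ListNotations.
Open Scope R_scope.

(* If T_q(mn) <> T_q(m'n') then some power q^k lies in (mn, m'n'], and since
   m'n' - mn <= D := q^(mu-rho) q^nu + q^rho q^mu + q^mu (a quantity <= 3 q^(mu+nu-rho)),
   k is one of mu+nu-1, mu+nu, mu+nu+1 and mn lies in [q^k - D, q^k).  For fixed m
   this confines n to three intervals of length D/m <= q D / q^mu, so each m
   contributes O(q^(nu-rho) + 1) bad pairs and there are fewer than q^mu values of m. *)

Lemma powerRZ_le_mono (Q : R) (a b : Z) :
  1 <= Q -> (a <= b)%Z -> powerRZ Q a <= powerRZ Q b.
Proof.
  intros HQ Hab; rewrite !powerRZ_Rpower by lra.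
  apply Rle_Rpower; [lra | now apply IZR_le].
Qed.

Lemma powerRZ_lt_mono_inv (Q : R) (a b : Z) :
  1 <= Q -> powerRZ Q a < powerRZ Q b -> (a < b)%Z.
Proof.
  intros HQ Hlt; destruct (Z_lt_le_dec a b) as [|Hba]; auto.
  pose proof (powerRZ_le_mono Q b a HQ Hba); lra.
Qed.

Lemma Int_part_neq_between (u v : R) :
  u <= v -> Int_part u <> Int_part v -> exists k : Z, u < IZR k <= v.
Proof.
  intros Huv Hne.
  destruct (base_Int_part u) as [Hu1 Hu2], (base_Int_part v) as [Hv1 Hv2].
  assert (Hlt : (Int_part u < Int_part v + 1)%Z)
    by (apply lt_IZR; rewrite plus_IZR; simpl; lra).
  exists (Int_part u + 1)%Z; rewrite plus_IZR; split; [simpl; lra|].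
  assert (Hle : IZR (Int_part u + 1) <= IZR (Int_part v)) by (apply IZR_le; lia).
  rewrite plus_IZR in Hle; lra.
Qed.

Lemma Tq_neq_power_between (q : nat) (x y : R) :
  (2 <= q)%nat -> 0 < x -> x <= y -> Tq q x <> Tq q y ->
  exists k : Z, x < powerRZ (INR q) k <= y.
Proof.
  intros hq hx hxy hne.
  assert (HQ : 1 < INR q) by (apply lt_1_INR; lia).
  assert (HL : 0 < ln (INR q)) by (rewrite <- ln_1; apply ln_increasing; lra).
  assert (Hlog : forall z, 0 < z -> Rpower (INR q) (ln z / ln (INR q)) = z).
  { intros z Hz; unfold Rpower.
    replace (ln z / ln (INR q) * ln (INR q)) with (ln z) by (field; lra).
    now apply exp_ln. }
  set (u := ln x / ln (INR q)); set (v := ln y / ln (INR q)).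
  assert (Huv : u <= v).
  { destruct (Rle_lt_dec u v) as [|Hvu]; auto.
    pose proof (Rpower_lt _ _ _ HQ Hvu) as H.
    unfold u, v in H; rewrite !Hlog in H by lra; lra. }
  destruct (Int_part_neq_between u v Huv hne) as [k [Hk1 Hk2]].
  exists k; rewrite powerRZ_Rpower by lra; split.
  - rewrite <- (Hlog x) at 1 by lra; now apply Rpower_lt.
  - rewrite <- (Hlog y) by lra; apply Rle_Rpower; [lra | exact Hk2].
Qed.

Definition in_Ico (a b : R) (n : nat) : bool :=
  if Rle_dec a (INR n) then if Rlt_dec (INR n) b then true else false else false.

Lemma in_IcoP (a b : R) (n : nat) : in_Ico a b n = true <-> a <= INR n < b.
Proof.
  unfold in_Ico; destruct (Rle_dec a (INR n)), (Rlt_dec (INR n) b);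
    split; intros; try lra; easy.
Qed.

Lemma length_filter_or {A : Type} (P P1 P2 : A -> bool) (l : list A) :
  (forall x, P x = true -> P1 x = true \/ P2 x = true) ->
  (length (filter P l) <= length (filter P1 l) + length (filter P2 l))%nat.
Proof.
  intros H; induction l as [|x l IH]; simpl; auto.
  destruct (P x) eqn:E.
  - destruct (H x E) as [-> | ->]; destruct (P1 x), (P2 x); simpl; lia.
  - destruct (P1 x), (P2 x); simpl; lia.
Qed.

Lemma length_filter_seq_Ico (P : nat -> bool) (a b : R) (s N : nat) :
  a <= b -> (forall n, P n = true -> a <= INR n < b) ->
  INR (length (filter P (seq s N))) <= b - a + 1.
Proof.
  intros Hab HP.
  (* the elements still to be counted lie in [max a s, b) *)
  assert (Hgen : forall N s,
    INR (length (filter P (seq s N))) <= Rmax 0 (b - Rmax a (INR s) + 1)).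
  { clear s N; intros N; induction N as [|N IH]; intros s; simpl; [apply Rmax_l|].
    specialize (IH (S s)); rewrite S_INR in IH.
    destruct (P s) eqn:E.
    - destruct (HP s E); simpl length; rewrite S_INR.
      revert IH; unfold Rmax; repeat destruct Rle_dec; intros; lra.
    - revert IH; unfold Rmax; repeat destruct Rle_dec; intros; lra. }
  specialize (Hgen N s); revert Hgen; unfold Rmax; repeat destruct Rle_dec; intros; lra.
Qed.

Lemma length_filter_seq_Ico_union (P : nat -> bool) (ks : list Z) (c : Z -> R)
    (L : R) (s N : nat) :
  0 <= L -> (forall n, P n = true -> exists k, In k ks /\ c k - L <= INR n < c k) ->
  INR (length (filter P (seq s N))) <= INR (length ks) * (L + 1).
Proof.
  intros HL; revert P; induction ks as [|k ks IH]; intros P HP.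
  - enough (Hnil : filter P (seq s N) = []) by (rewrite Hnil; simpl; lra).
    induction (seq s N) as [|x l IHl]; simpl; auto.
    destruct (P x) eqn:E; auto.
    destruct (HP x E) as [? [[] _]].
  - set (I := in_Ico (c k - L) (c k)).
    set (P' := fun n => andb (P n) (negb (I n))).
    assert (Hsplit : forall n, P n = true -> I n = true \/ P' n = true).
    { intros n Hn; unfold P'; rewrite Hn; destruct (I n); auto. }
    assert (HI := length_filter_seq_Ico I (c k - L) (c k) s N
                    ltac:(lra) (fun n Hn => proj1 (in_IcoP _ _ n) Hn)).
    assert (HP' : INR (length (filter P' (seq s N))) <= INR (length ks) * (L + 1)).
    { apply IH; intros n Hn; unfold P' in Hn; apply andb_prop in Hn as [Hn HnI].
      destruct (HP n Hn) as [j [[<- | Hj] Hjn]]; [|eauto].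
      apply in_IcoP in Hjn; fold I in Hjn; rewrite Hjn in HnI; discriminate. }
    eapply Rle_trans; [apply le_INR, (length_filter_or P I P' _ Hsplit)|].
    rewrite plus_INR; simpl length; rewrite S_INR; lra.
Qed.

Lemma length_filter_list_prod_le {A B : Type} (f : A * B -> bool)
    (l1 : list A) (l2 : list B) (K : R) :
  (forall a, INR (length (filter (fun b => f (a, b)) l2)) <= K) ->
  INR (length (filter f (list_prod l1 l2))) <= INR (length l1) * K.
Proof.
  intros H; induction l1 as [|a l1 IH]; [simpl; lra|].
  cbn [list_prod length]; rewrite filter_app, length_app, plus_INR, S_INR.
  assert (Hfib : forall l, length (filter f (map (fun b => (a, b)) l))
                           = length (filter (fun b => f (a, b)) l)).
  { induction l as [|b l IHl]; simpl; auto; destruct (f (a, b)); simpl; auto. }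
  rewrite Hfib; specialize (H a); lra.
Qed.

Section BadPairs.

Variables q mu nu rho : nat.
Hypothesis hq : (2 <= q)%nat.
Hypothesis hrho : (2 * Z.of_nat rho <= Z.of_nat nu - 1)%Z.

Local Notation Q := (INR q).

Lemma Q_ge_2 : 2 <= Q.
Proof. replace 2 with (INR 2) by (simpl; lra); now apply le_INR. Qed.

Lemma powerRZ_Q_pos (k : Z) : 0 < powerRZ Q k.
Proof. pose proof Q_ge_2; apply powerRZ_lt; lra. Qed.

Lemma powerRZ_Q_le (a b : Z) : (a <= b)%Z -> powerRZ Q a <= powerRZ Q b.
Proof. pose proof Q_ge_2; apply powerRZ_le_mono; lra. Qed.

Lemma powerRZ_Q_add (a b : Z) : powerRZ Q (a + b) = powerRZ Q a * powerRZ Q b.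
Proof. pose proof Q_ge_2; apply powerRZ_add; lra. Qed.

Definition incr_bound : R :=
  powerRZ Q (Z.of_nat mu - Z.of_nat rho) * powerRZ Q (Z.of_nat nu)
  + powerRZ Q (Z.of_nat rho) * powerRZ Q (Z.of_nat mu)
  + powerRZ Q (Z.of_nat mu - Z.of_nat rho) * powerRZ Q (Z.of_nat rho).

Lemma incr_bound_nonneg : 0 <= incr_bound.
Proof.
  unfold incr_bound.
  pose proof (powerRZ_Q_pos (Z.of_nat mu - Z.of_nat rho));
  pose proof (powerRZ_Q_pos (Z.of_nat nu)); pose proof (powerRZ_Q_pos (Z.of_nat rho));
  pose proof (powerRZ_Q_pos (Z.of_nat mu)); nra.
Qed.

Lemma incr_bound_le :
  incr_bound <= 3 * powerRZ Q (Z.of_nat (mu + nu) - Z.of_nat rho).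
Proof.
  unfold incr_bound; rewrite <- !powerRZ_Q_add.
  assert (powerRZ Q (Z.of_nat mu - Z.of_nat rho + Z.of_nat nu)
          <= powerRZ Q (Z.of_nat (mu + nu) - Z.of_nat rho)) by (apply powerRZ_Q_le; lia).
  assert (powerRZ Q (Z.of_nat rho + Z.of_nat mu)
          <= powerRZ Q (Z.of_nat (mu + nu) - Z.of_nat rho)) by (apply powerRZ_Q_le; lia).
  assert (powerRZ Q (Z.of_nat mu - Z.of_nat rho + Z.of_nat rho)
          <= powerRZ Q (Z.of_nat (mu + nu) - Z.of_nat rho)) by (apply powerRZ_Q_le; lia).
  lra.
Qed.

Lemma bad_spec (m n : nat) : bad q mu nu rho m n = true ->
  powerRZ Q (Z.of_nat mu - 1) <= INR m < powerRZ Q (Z.of_nat mu) /\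
  powerRZ Q (Z.of_nat nu - 1) <= INR n < powerRZ Q (Z.of_nat nu) /\
  Tq q (INR m * INR n) <>
    Tq q ((INR m + powerRZ Q (Z.of_nat mu - Z.of_nat rho)) *
          (INR n + powerRZ Q (Z.of_nat rho))).
Proof.
  unfold bad; rewrite <- !pow_powerRZ.
  repeat match goal with |- context [if ?c then _ else _] => destruct c end;
    easy.
Qed.

Lemma shifted_product_le (M N : R) :
  0 <= M < powerRZ Q (Z.of_nat mu) -> 0 <= N < powerRZ Q (Z.of_nat nu) ->
  (M + powerRZ Q (Z.of_nat mu - Z.of_nat rho)) * (N + powerRZ Q (Z.of_nat rho))
  <= M * N + incr_bound.
Proof.
  intros HM HN; unfold incr_bound.
  pose proof (powerRZ_Q_pos (Z.of_nat mu - Z.of_nat rho));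
  pose proof (powerRZ_Q_pos (Z.of_nat rho)); nra.
Qed.

Lemma shifted_product_lt (M N : R) :
  0 <= M < powerRZ Q (Z.of_nat mu) -> 0 <= N < powerRZ Q (Z.of_nat nu) ->
  (M + powerRZ Q (Z.of_nat mu - Z.of_nat rho)) * (N + powerRZ Q (Z.of_nat rho))
  < powerRZ Q (Z.of_nat mu + Z.of_nat nu + 2).
Proof.
  intros HM HN; pose proof Q_ge_2.
  assert (powerRZ Q (Z.of_nat mu - Z.of_nat rho) <= powerRZ Q (Z.of_nat mu))
    by (apply powerRZ_Q_le; lia).
  assert (powerRZ Q (Z.of_nat rho) <= powerRZ Q (Z.of_nat nu))
    by (apply powerRZ_Q_le; lia).
  rewrite !powerRZ_Q_add; simpl powerRZ.
  set (A := powerRZ Q (Z.of_nat mu)) in *; set (B := powerRZ Q (Z.of_nat nu)) in *.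
  assert (Hprod : (M + powerRZ Q (Z.of_nat mu - Z.of_nat rho)) *
                  (N + powerRZ Q (Z.of_nat rho)) < (2 * A) * (2 * B))
    by (apply Rmult_le_0_lt_compat; pose proof (powerRZ_Q_pos (Z.of_nat rho));
        pose proof (powerRZ_Q_pos (Z.of_nat mu - Z.of_nat rho)); lra).
  assert (0 < A * B) by (apply Rmult_lt_0_compat; apply powerRZ_Q_pos).
  assert (4 * (A * B) <= (Q * Q) * (A * B)) by (apply Rmult_le_compat_r; nra).
  lra.
Qed.

Lemma bad_pair_near_power (m n : nat) : bad q mu nu rho m n = true ->
  powerRZ Q (Z.of_nat mu - 1) <= INR m /\
  exists k, In k [Z.of_nat (mu + nu) - 1; Z.of_nat (mu + nu); Z.of_nat (mu + nu) + 1]%Z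
    /\ powerRZ Q k - incr_bound <= INR m * INR n < powerRZ Q k.
Proof.
  intros Hbad; destruct (bad_spec m n Hbad) as [[Hm1 Hm2] [[Hn1 Hn2] Hne]].
  pose proof Q_ge_2.
  pose proof (powerRZ_Q_pos (Z.of_nat mu - 1)); pose proof (powerRZ_Q_pos (Z.of_nat nu - 1)).
  pose proof (powerRZ_Q_pos (Z.of_nat mu - Z.of_nat rho)); pose proof (powerRZ_Q_pos (Z.of_nat rho)).
  split; [lra|].
  assert (HM : 0 <= INR m < powerRZ Q (Z.of_nat mu)) by lra.
  assert (HN : 0 <= INR n < powerRZ Q (Z.of_nat nu)) by lra.
  assert (Hpos : 0 < INR m * INR n) by (apply Rmult_lt_0_compat; lra).
  assert (Hincr : INR m * INR n <= (INR m + powerRZ Q (Z.of_nat mu - Z.of_nat rho)) *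
                                   (INR n + powerRZ Q (Z.of_nat rho))) by nra.
  destruct (Tq_neq_power_between q _ _ hq Hpos Hincr Hne) as [k [Hk1 Hk2]].
  exists k; split.
  - assert (Hlo : powerRZ Q (Z.of_nat mu - 1 + (Z.of_nat nu - 1)) <= INR m * INR n)
      by (rewrite powerRZ_Q_add; apply Rmult_le_compat; lra).
    pose proof (powerRZ_lt_mono_inv Q _ _ ltac:(lra) (Rle_lt_trans _ _ _ Hlo Hk1)).
    pose proof (powerRZ_lt_mono_inv Q _ _ ltac:(lra)
                  (Rle_lt_trans _ _ _ Hk2 (shifted_product_lt _ _ HM HN))).
    simpl; lia.
  - pose proof (shifted_product_le _ _ HM HN); lra.
Qed.

Lemma bad_fiber_count (m N : nat) :
  INR (length (filter (fun n => bad q mu nu rho m n) (seq 0 N)))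
  <= 3 * (incr_bound * Q / powerRZ Q (Z.of_nat mu) + 1).
Proof.
  pose proof Q_ge_2; pose proof incr_bound_nonneg.
  set (D := incr_bound) in *.
  set (A1 := powerRZ Q (Z.of_nat mu - 1)).
  assert (HA1 : 0 < A1) by apply powerRZ_Q_pos.
  assert (HA : powerRZ Q (Z.of_nat mu) = A1 * Q).
  { replace (Z.of_nat mu) with (Z.of_nat mu - 1 + 1)%Z at 1 by lia.
    rewrite powerRZ_Q_add; fold A1; simpl powerRZ; ring. }
  rewrite HA; replace (D * Q / (A1 * Q)) with (D / A1) by (field; lra).
  replace 3 with (INR (length [Z.of_nat (mu + nu) - 1; Z.of_nat (mu + nu);
                               Z.of_nat (mu + nu) + 1]%Z)) by (simpl; lra).
  apply (length_filter_seq_Ico_union _ _ (fun k => powerRZ Q k / INR m)).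
  { unfold Rdiv; apply Rmult_le_pos; [lra | apply Rlt_le, Rinv_0_lt_compat, HA1]. }
  intros n Hbad; destruct (bad_pair_near_power m n Hbad) as [Hm [k [Hk [Hlo Hhi]]]].
  exists k; split; [exact Hk|].
  (* dividing [q^k - D <= m n < q^k] by m >= q^(mu-1) *)
  fold A1 in Hm; fold D in Hlo; assert (Hinv : 0 < / INR m) by (apply Rinv_0_lt_compat; lra).
  assert (D / INR m <= D / A1)
    by (apply Rmult_le_compat_l; [lra | apply Rinv_le_contravar; lra]).
  assert (powerRZ Q k / INR m - D / INR m <= INR n < powerRZ Q k / INR m).
  { replace (INR n) with (INR m * INR n / INR m) by (field; lra).
    unfold Rdiv; rewrite <- Rmult_minus_distr_r.
    split; [apply Rmult_le_compat_r | apply Rmult_lt_compat_r]; lra. }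
  lra.
Qed.

End BadPairs.

Theorem mainTheorem8 (q : nat) (hq : (2 <= q)%nat) :
  exists C : R, 0 < C /\
    forall mu nu rho : nat, (2 * Z.of_nat rho <= Z.of_nat nu - 1)%Z ->
      INR (badcount q mu nu rho) <=
        C * ln (INR q ^ (mu + nu)) *
          powerRZ (INR q) (Z.of_nat (mu + nu) - Z.of_nat rho).
Proof.
  pose proof (Q_ge_2 q hq) as HQ.
  assert (HL : 0 < ln (INR q)) by (rewrite <- ln_1; apply ln_increasing; lra).
  exists ((9 * INR q + 3) / ln (INR q)); split.
  { apply Rdiv_lt_0_compat; lra. }
  intros mu nu rho hrho.
  set (P := powerRZ (INR q) (Z.of_nat (mu + nu) - Z.of_nat rho)).
  set (A := powerRZ (INR q) (Z.of_nat mu)).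
  pose proof (incr_bound_le q mu nu rho hq hrho) as HD; fold P in HD.
  pose proof (incr_bound_nonneg q mu nu rho hq).
  assert (HA : 0 < A) by apply (powerRZ_Q_pos q hq).
  assert (HAP : A <= P) by (apply (powerRZ_Q_le q hq); lia).
  assert (Hmn : 1 <= INR (mu + nu)) by (apply (le_INR 1); lia).
  unfold badcount.
  eapply Rle_trans.
  { apply length_filter_list_prod_le; intros m; cbn [fst snd].
    apply (bad_fiber_count q mu nu rho hq hrho). }
  rewrite length_seq, pow_INR, pow_powerRZ, ln_pow by lra; fold A P.
  replace ((9 * INR q + 3) / ln (INR q) * (INR (mu + nu) * ln (INR q)) * P)
    with ((9 * INR q + 3) * P * INR (mu + nu)) by (field; lra).
  replace (A * (3 * (incr_bound q mu nu rho * INR q / A + 1)))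
    with (3 * incr_bound q mu nu rho * INR q + 3 * A) by (field; lra).
  assert (3 * incr_bound q mu nu rho * INR q + 3 * A <= (9 * INR q + 3) * P) by nra.
  assert ((9 * INR q + 3) * P * 1 <= (9 * INR q + 3) * P * INR (mu + nu))
    by (apply Rmult_le_compat_l; nra).
  lra.
Qed.
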